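(* There exist a finite atom set $\Phi$, a finite agent set $I$, a logic $\Lambda$, an $\boldsymbol{\mathcal{L}}_\Lambda$ modal space $\boldsymbol{X}$ and a clean map $\boldsymbol{f}$ on $\boldsymbol{X}$ induced by a finite, static multi-pointed action model that is not Boolean, such that $\boldsymbol{f}$ exhibits nontrivial recurrence (with respect to the Stone topology): there is $\boldsymbol{x}\in\boldsymbol{X}$ whose orbit $\mathcal{O}_{\boldsymbol{f}}(\boldsymbol{x})$ is not periodic and contains a recurrent point.
   Context: Setting: atom set $\Phi$, finite agent set $I$, modal language $\mathcal{L}$ ($\varphi::=\top\mid p\mid\neg\varphi\mid\varphi\wedge\varphi\mid\square_i\varphi$), logic $\Lambda$ a normal modal logic extending $K$, $\boldsymbol{\mathcal{L}}_\Lambda$ the set of $\Lambda$-equivalence classes of formulas. For a set $X$ of pointed Kripke models (countable nonempty state sets, standard semantics), the modal space is $\boldsymbol{X}=\{\boldsymbol{x}:x\in X\}$, $\boldsymbol{x}=\{y\in X:y,x\text{ satisfy the same formulas}\}$, with the Stone topology generated by the sets $\{\boldsymbol{x}:x\vDash\varphi\}$. Clean map: induced via product update $x\mapsto x\otimes\Sigma\Gamma$ by a multi-pointed action model $\Sigma\Gamma=(\llbracket\Sigma\rrbracket,\mathsf{R},pre,post,\Gamma)$ (countable action set, relations $\mathsf{R}_i$, preconditions in $\mathcal{L}$, postconditions $\top$ or conjunctions of literals over $\Phi$, designated set $\emptyset\ne\Gamma\subseteq\llbracket\Sigma\rrbracket$) that is precondition finite, exhaustive, deterministic and closing over $X$ (every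 $x\in X$ satisfies $pre(\sigma)$ for exactly one $\sigma\in\Gamma$, finitely many preconditions up to equivalence, and $x\otimes\Sigma\Gamma\in X$). Product update: states $(s,\sigma)$ with $Ms\vDash pre(\sigma)$, relations componentwise, $p$ true at $(s,\sigma)$ iff $post(\sigma)\vDash p$, or $s\in\llbracket p\rrbracket$ and $post(\sigma)\nvDash\neg p$; designated state $(s,\sigma)$ for the applicable $\sigma\in\Gamma$. $\boldsymbol{f}(\boldsymbol{x})$ is the class of $x\otimes\Sigma\Gamma$. $\Sigma\Gamma$ is finite if $\llbracket\Sigma\rrbracket$ is finite, Boolean if every precondition is a Boolean (modality-free) formula, static if every postcondition is $\top$. Orbit: $\mathcal{O}_{\boldsymbol{f}}(\boldsymbol{x})=\{\boldsymbol{f}^n(\boldsymbol{x}):n\in\mathbb{N}_0\}$; it is periodic if $\boldsymbol{f}^{n+k}(\boldsymbol{x})=\boldsymbol{f}^n(\boldsymbol{x})$ for some $n\ge0,k>0$. The limit set $\omega_{\boldsymbol{f}}(\boldsymbol{y})$ is the set of limits of convergent subsequences $\boldsymbol{f}^{n_1}(\boldsymbol{y}),\boldsymbol{f}^{n_2}(\boldsymbol{y}),\dots$ ($n_1<n_2<\cdots$); $\boldsymbol{y}$ is recurrent if $\boldsymbol{y}\in\omega_{\boldsymbol{f}}(\boldsymbol{y})$. *)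

From mathcomp Require Import all_boot.
Unset Printing Implicit Defensive.

Section Modal.
Variables (Phi I : finType).

Inductive form : Type :=
| FTop : form
| FAtom : Phi -> form
| FNeg : form -> form
| FAnd : form -> form -> form
| FBox : I -> form -> form.

Definition FImp (a b : form) : form := FNeg (FAnd a (FNeg b)).
Definition FIff (a b : form) : form := FAnd (FImp a b) (FImp b a).

Fixpoint boolean_form (a : form) : bool :=
  match a with
  | FTop | FAtom _ => true
  | FNeg b => boolean_form b
  | FAnd b c => boolean_form b && boolean_form c
  | FBox _ _ => false
  end.

Fixpoint subst (s : Phi -> form) (a : form) : form :=
  match a with
  | FTop => FTop
  | FAtom p => s p
  | FNeg b => FNeg (subst s b)
  | FAnd b c => FAnd (subst s b) (subst s c)
  | FBox i b => FBox i (subst s b)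
  end.

Record kmodel := KModel {
  st : Type;
  rel : I -> st -> st -> Prop;
  val : Phi -> st -> Prop }.




Record pmodel := PModel { mdl : kmodel; pt : st mdl }.

Definition countable_type (T : Type) : Prop := exists f : T -> nat, injective f.

Fixpoint sat (M : kmodel) (s : st M) (a : form) : Prop :=
  match a with
  | FTop => True
  | FAtom p => val M p s
  | FNeg b => ~ sat M s b
  | FAnd b c => sat M s b /\ sat M s c
  | FBox i b => forall t, rel M i s t -> sat M t b
  end.

Definition psat (x : pmodel) (a : form) : Prop := sat (mdl x) (pt x) a.

(** modal equivalence = same class in the modal space *)
Definition meq (x y : pmodel) : Prop := forall a, psat x a <-> psat y a.

(** Normal modal logics extending K.  K is taken semantically as the set of
    formulas valid on all Kripke models (equal to axiomatic K by completeness). *)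
Definition K_valid (a : form) : Prop := forall (M : kmodel) (s : st M), sat M s a.

Definition normal_logic (L : form -> Prop) : Prop :=
  [/\ (forall a, K_valid a -> L a),
      (forall a b, L (FImp a b) -> L a -> L b),
      (forall i a, L a -> L (FBox i a)) &
      (forall s a, L a -> L (subst s a))].

Definition modal_space (L : form -> Prop) (X : pmodel -> Prop) : Prop :=
  forall x, X x -> countable_type (st (mdl x)) /\ (forall a, L a -> psat x a).

(** Multi-pointed action models.  A postcondition is a list of literals
    (b, p) meaning p (b = true) or ~p (b = false); the empty list is T. *)
Record amodel := AModel {
  act : Type;
  arel : I -> act -> act -> Prop;
  pre : act -> form;
  post : act -> seq (bool * Phi);
  des : act -> Prop }.

Definition post_entails (l : seq (bool * Phi)) (b : bool) (p : Phi) : Prop :=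
  forall v : Phi -> bool, (forall lit, lit \in l -> v lit.2 = lit.1) -> v p = b.

Definition upd_model (M : kmodel) (A : amodel) : kmodel :=
  @KModel {sa : st M * act A | sat M sa.1 (pre A sa.2)}
    (fun i u w => rel M i (sval u).1 (sval w).1 /\ arel A i (sval u).2 (sval w).2)
    (fun p u => post_entails (post A (sval u).2) true p \/
                (val M p (sval u).1 /\ ~ post_entails (post A (sval u).2) false p)).

Definition product_update (x : pmodel) (A : amodel) (sg : act A)
  (H : psat x (pre A sg)) : pmodel :=
  @PModel (upd_model (mdl x) A) (exist _ (pt x, sg) H).

Definition amodel_finite (A : amodel) : Prop :=
  exists (n : nat) (e : 'I_n -> act A), forall a, exists i, e i = a.

Definition amodel_boolean (A : amodel) : Prop :=
  forall a : act A, boolean_form (pre A a).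

Definition amodel_static (A : amodel) : Prop :=
  forall a : act A, post A a = [::].

Definition precondition_finite (L : form -> Prop) (A : amodel) : Prop :=
  exists (n : nat) (e : 'I_n -> form), forall a : act A, exists i, L (FIff (pre A a) (e i)).

Definition exhaustive_deterministic (X : pmodel -> Prop) (A : amodel) : Prop :=
  forall x, X x -> exists sg, [/\ des A sg, psat x (pre A sg) &
                   forall sg', des A sg' -> psat x (pre A sg') -> sg' = sg].

Definition closing (X : pmodel -> Prop) (A : amodel) : Prop :=
  forall x (sg : act A) (H : psat x (pre A sg)), X x -> des A sg ->
    X (product_update x A sg H).

Definition clean_action_model (L : form -> Prop) (X : pmodel -> Prop) (A : amodel) : Prop :=
  [/\ countable_type (act A), (exists a, des A a),
      precondition_finite L A, exhaustive_deterministic X A & closing X A].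

(** xs is a sequence of representatives of the orbit f^n(x):
    xs 0 = x and xs (n+1) = xs n (x) Sigma Gamma. *)
Definition orbit_seq (A : amodel) (x : pmodel) (xs : nat -> pmodel) : Prop :=
  xs 0 = x /\
  forall n, exists (sg : act A) (H : psat (xs n) (pre A sg)),
    des A sg /\ xs n.+1 = product_update (xs n) A sg H.

(** Convergence in the Stone topology (generated by the sets [phi]) *)
Definition converges (ys : nat -> pmodel) (y : pmodel) : Prop :=
  forall a, psat y a -> exists K, forall k, K <= k -> psat (ys k) a.

Definition recurrent_seq (zs : nat -> pmodel) : Prop :=
  exists nk : nat -> nat, (forall k, nk k < nk k.+1) /\
    converges (fun k => zs (nk k)) (zs 0).

Definition periodic_seq (xs : nat -> pmodel) : Prop :=
  exists n k, 0 < k /\ meq (xs (n + k)) (xs n).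

End Modal.

Arguments FTop {Phi I}. Arguments FAtom {Phi I}. Arguments FNeg {Phi I}.
Arguments FAnd {Phi I}. Arguments FBox {Phi I}.
Arguments FImp {Phi I}. Arguments FIff {Phi I}. Arguments boolean_form {Phi I}.
Arguments subst {Phi I}. Arguments st {Phi I}. Arguments rel {Phi I}. Arguments val {Phi I}.
Arguments mdl {Phi I}. Arguments pt {Phi I}. Arguments sat {Phi I}. Arguments psat {Phi I}.
Arguments meq {Phi I}. Arguments K_valid {Phi I}. Arguments normal_logic {Phi I}.
Arguments modal_space {Phi I}. Arguments act {Phi I}. Arguments arel {Phi I}.
Arguments pre {Phi I}. Arguments post {Phi I}. Arguments des {Phi I}.
Arguments post_entails {Phi}. Arguments upd_model {Phi I}. Arguments product_update {Phi I}.
Arguments amodel_finite {Phi I}. Arguments amodel_boolean {Phi I}. Arguments amodel_static {Phi I}.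
Arguments precondition_finite {Phi I}. Arguments exhaustive_deterministic {Phi I}.
Arguments closing {Phi I}. Arguments clean_action_model {Phi I}. Arguments orbit_seq {Phi I}.
Arguments converges {Phi I}. Arguments recurrent_seq {Phi I}. Arguments periodic_seq {Phi I}.

From Pilot Require Import Defs.
From mathcomp Require Import all_boot.
From mathcomp Require Import zify.
From Stdlib Require Import Classical ClassicalEpsilon ProofIrrelevance.

(* The model [shift_model P] has a descending chain
   [inr k -> inr k.-1] and roots [inl n] seeing the chain node [inr r] iff
   [P (r + n)].  The update by the single action with precondition <>T
   removes the dead end [inr 0], so the updated root [n] is bisimilar to the
   root [n.+1]: the orbit of the root [0] is the sequence of roots.  A formula
   of modal depth d is decided at the root n by P on [n, n + d), and the
   formula <>(exactly r steps to a dead end) reads off [P (r + n)].  For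
   P j := "the 2-adic valuation of j + 1 is even", P is not eventually
   periodic, so the orbit is not periodic, while P (r + 2^K) = P r for
   r + 1 < 2^K makes the roots 2^K converge to the root 0. *)

Lemma logn2_odd_mul o a : odd o -> logn 2 (o * 2 ^ a) = a.
Proof.
move=> o_odd; have o_gt0 : 0 < o by case: o o_odd.
rewrite lognM ?expn_gt0 // lognX (logn_prime 2 (isT : prime 2)) eqxx muln1.
by rewrite logn_coprime ?coprime2n.
Qed.

Definition eventually_periodic (P : nat -> bool) : Prop :=
  exists n k, 0 < k /\ forall j, n <= j -> P (j + k) = P j.

Definition even_ruler (j : nat) : bool := ~~ odd (logn 2 j.+1).

Lemma even_ruler_unbounded N : exists2 j, N <= j & even_ruler j.
Proof.
exists N.*2; first by rewrite -addnn leq_addr.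
by rewrite /even_ruler -[(N.*2).+1]muln1 -(expn0 2) logn2_odd_mul //= odd_double.
Qed.

Lemma even_ruler_addX K r : r.+1 < 2 ^ K -> even_ruler (r + 2 ^ K) = even_ruler r.
Proof.
move=> r_lt.
have [o co def_r] := pfactor_coprime (isT : prime 2) (ltn0Sn r).
set a := logn 2 r.+1 in def_r.
have o_odd : odd o by rewrite -coprime2n.
have a_lt : a < K.
  have o_gt0 : 0 < o by case: o o_odd {co def_r}.
  rewrite -(ltn_exp2l _ _ (isT : 1 < 2)); apply: leq_ltn_trans r_lt.
  by rewrite def_r leq_pmull.
rewrite /even_ruler.
have -> : (r + 2 ^ K).+1 = (o + 2 ^ (K - a)) * 2 ^ a.
  by rewrite mulnDl -def_r -expnD subnK ?addSn // ltnW.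
rewrite logn2_odd_mul //.
by rewrite oddD o_odd oddX /= orbF subn_eq0 -ltnNge a_lt.
Qed.

Lemma even_ruler_shift_mismatch n k :
  0 < k -> exists2 j, n <= j & even_ruler (j + k) != even_ruler j.
Proof.
move=> k_gt0.
have [c cc def_k] := pfactor_coprime (isT : prime 2) k_gt0.
set b := logn 2 k in def_k.
have c_odd : odd c by rewrite -coprime2n.
have c_gt0 : 0 < c by case: c c_odd {cc def_k}.
have pow_gt0 : 0 < 2 ^ b by rewrite expn_gt0.
have j1_gt0 : 0 < (c + 4 * n) * 2 ^ b by rewrite muln_gt0 pow_gt0 addn_gt0 c_gt0.
have j2_gt0 : 0 < (c + 2 * n) * 2 ^ b.+1 by rewrite muln_gt0 expn_gt0 addn_gt0 c_gt0.
exists ((c + 4 * n) * 2 ^ b).-1.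
  rewrite -ltnS prednK //; apply: leq_trans (leq_pmulr _ pow_gt0); lia.
have -> : ((c + 4 * n) * 2 ^ b).-1 + k = ((c + 2 * n) * 2 ^ b.+1).-1.
  rewrite def_k expnS; lia.
have odd_c4n : odd (c + 4 * n) by rewrite oddD c_odd oddM.
have odd_c2n : odd (c + 2 * n) by rewrite oddD c_odd oddM.
rewrite /even_ruler !prednK // !logn2_odd_mul //= negbK.
by case: (odd b).
Qed.

Lemma even_ruler_not_eventually_periodic : ~ eventually_periodic even_ruler.
Proof.
case=> n [k [k_gt0 per]]; have [j nj] := even_ruler_shift_mismatch n k k_gt0.
by rewrite per ?eqxx.
Qed.

Section Bisimulation.
Variables (Phi I : finType) (M N : kmodel Phi I).

Definition bisimulation (Z : st M -> st N -> Prop) : Prop :=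
  [/\ forall p s t, Z s t -> (Defs.val M p s <-> Defs.val N p t),
      forall i s t s', Z s t -> Defs.rel M i s s' ->
        exists2 t', Defs.rel N i t t' & Z s' t' &
      forall i s t t', Z s t -> Defs.rel N i t t' ->
        exists2 s', Defs.rel M i s s' & Z s' t'].

Lemma bisimulation_sat Z :
  bisimulation Z -> forall a s t, Z s t -> sat M s a <-> sat N t a.
Proof.
case=> Zval Zforth Zback; elim=> [|p|a IH|a IHa b IHb|i a IH] s t Zst /=.
- by [].
- exact: Zval.
- by rewrite (IH s t Zst).
- by rewrite (IHa s t Zst) (IHb s t Zst).
- split=> sa u.
  + by case/(Zback _ _ _ _ Zst)=> s' ss' Zs'u; rewrite -(IH _ _ Zs'u); apply: sa.
  + by case/(Zforth _ _ _ _ Zst)=> t' tt' Zut'; rewrite (IH _ _ Zut'); apply: sa.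
Qed.

End Bisimulation.

Arguments bisimulation {Phi I M N}.
Arguments bisimulation_sat {Phi I M N Z}.

Lemma bisimulation_eq (Phi I : finType) (M : kmodel Phi I) :
  bisimulation (@eq (st M)).
Proof. by split=> [p s _ <- | i s _ s' <- | i s _ s' <-] //; exists s'. Qed.

Section UpdateBasics.
Variables (Phi I : finType).

Lemma countable_upd_model (M : kmodel Phi I) (A : amodel Phi I) :
  countable_type (st M) -> countable_type (act A) ->
  countable_type (st (upd_model M A)).
Proof.
move=> [f f_inj] [h h_inj]; exists (fun u => pickle (f (sval u).1, h (sval u).2)).
move=> [[s a] sa] [[t b] tb] /= /(pcan_inj pickleK) [/f_inj est /h_inj eab].
by subst t b; congr exist; apply: proof_irrelevance.
Qed.

Variables (A : amodel Phi I) (sg : act A).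

(* The identity branch is junk: it is never taken along an orbit where [sg]
   stays applicable. *)
Definition update_by (y : pmodel Phi I) : pmodel Phi I :=
  match excluded_middle_informative (psat y (pre A sg)) with
  | left H => product_update y A sg H
  | right _ => y
  end.

Lemma orbit_seq_iter x :
  des A sg -> (forall n, psat (iter n update_by x) (pre A sg)) ->
  orbit_seq A x (fun n => iter n update_by x).
Proof.
move=> des_sg pre_iter; split=> // n; exists sg, (pre_iter n); split=> //=.
rewrite /update_by; case: excluded_middle_informative => [H|]; last first.
  by move/(_ (pre_iter n)).
by rewrite (proof_irrelevance _ H (pre_iter n)).
Qed.

End UpdateBasics.

Arguments update_by {Phi I} A sg y.
Arguments orbit_seq_iter {Phi I A sg}.

Lemma sat_subst (Phi I : finType) (M : kmodel Phi I) (sb : Phi -> form Phi I) a s :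
  sat M s (subst sb a) <->
  sat (@KModel Phi I (st M) (Defs.rel M) (fun p t => sat M t (sb p))) s a.
Proof.
elim: a s => [|p|b IH|b IHb c IHc|i b IH] s //=.
- by rewrite IH.
- by rewrite IHb IHc.
- by split=> H t Mst; apply/IH; apply: H.
Qed.

Lemma normal_K_valid (Phi I : finType) : normal_logic (@K_valid Phi I).
Proof.
split=> [//| a b Kab Ka M s | i a Ka M s t _ | sb a Ka M s].
- by apply: NNPP => nb; apply: (Kab M s); split; [exact: Ka | exact: nb].
- exact: Ka.
- by apply/sat_subst; apply: Ka.
Qed.

Fixpoint modal_depth {Phi I : finType} (a : form Phi I) : nat :=
  match a with
  | FTop | FAtom _ => 0
  | FNeg b => modal_depth b
  | FAnd b c => maxn (modal_depth b) (modal_depth c)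
  | FBox _ b => (modal_depth b).+1
  end.

Local Notation frm := (form 'I_0 'I_1).

Definition dia (a : frm) : frm := FNeg (FBox ord0 (FNeg a)).

Fixpoint chain_formula (r : nat) : frm :=
  if r is r'.+1 then dia (chain_formula r') else FBox ord0 (FNeg FTop).

Definition shift_action : amodel 'I_0 'I_1 :=
  @AModel 'I_0 'I_1 unit (fun _ _ _ => True) (fun _ => dia FTop) (fun _ => [::])
    (fun _ => True).

Definition shift_state (s : nat + nat) : nat + nat :=
  match s with inl n => inl n.+1 | inr k => inr k.-1 end.

Section ShiftModel.
Variable P : nat -> bool.

Definition shift_rel (s t : nat + nat) : Prop :=
  match s, t with
  | inl n, inr r => P (r + n)
  | inr k, inr l => k = l.+1
  | _, _ => False
  end.

Definition shift_model : kmodel 'I_0 'I_1 :=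
  @KModel 'I_0 'I_1 (nat + nat)%type (fun _ => shift_rel) (fun _ _ => False).

Local Notation U := shift_model.

Lemma sat_chain_box i k (a : frm) :
  sat U (inr k.+1) (FBox i a) <-> sat U (inr k) a.
Proof. by split=> [box | ka [//|l] /= [<-//]]; apply: (box (inr k)). Qed.

Lemma sat_chain0_box i (a : frm) : sat U (inr 0) (FBox i a).
Proof. by case. Qed.

Lemma sat_chain_dia_top k : sat U (inr k) (dia FTop) <-> 0 < k.
Proof.
case: k => [|k]; last by split=> // _ box; apply: (box (inr k)).
by split=> // nbox; case: nbox; exact: sat_chain0_box ord0 (FNeg FTop).
Qed.

Lemma sat_chain_formula r k : sat U (inr k) (chain_formula r) <-> k = r.
Proof.
elim: r k => [|r IH] [|k].
- by split=> // _; apply: sat_chain0_box.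
- by split=> // box; case: (box (inr k)).
- by split=> // nbox; case: nbox; exact: sat_chain0_box ord0 (FNeg (chain_formula r)).
- change (~ sat U (inr k.+1) (FBox ord0 (FNeg (chain_formula r))) <-> k.+1 = r.+1).
  by rewrite sat_chain_box /= IH; split=> [/NNPP -> | [-> /(_ erefl)]].
Qed.

Lemma sat_root_dia_chain_formula r n :
  sat U (inl n) (dia (chain_formula r)) <-> P (r + n).
Proof.
split=> [|Prn] /=.
- move=> nbox; apply: NNPP => nP; apply: nbox => -[//|l] /= Pln.
  by move/sat_chain_formula=> l_r; subst l; apply: nP.
- by move=> box; apply: (box (inr r)) => //; apply/sat_chain_formula.
Qed.

Lemma chain_modal_depth_equiv (a : frm) k l : modal_depth a <= k -> modal_depth a <= l ->
  (sat U (inr k) a <-> sat U (inr l) a).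
Proof.
elim: a k l => [|[]//|b IH|b IHb c IHc|i b IH] k l.
- by [].
- by move=> dk dl /=; rewrite (IH k l).
- rewrite /= !geq_max => /andP[bk ck] /andP[bl cl].
  by rewrite (IHb k l) ?(IHc k l).
- case: k l => [|k] [|l] dk dl //.
  by rewrite !sat_chain_box; apply: IH.
Qed.

Hypothesis P_unbounded : forall N, exists2 j, N <= j & P j.

Lemma sat_root_dia_top n : sat U (inl n) (dia FTop).
Proof.
have [j nj Pj] := P_unbounded n.
by move=> /= box; apply: (box (inr (j - n))) => //=; rewrite subnK.
Qed.

(* A root sees arbitrarily deep chain nodes, and all chain nodes of index at
   least [modal_modal_depth a] agree on [a]. *)
Lemma root_box_deep_chain n i (a : frm) r :
  sat U (inl n) (FBox i a) -> modal_depth a <= r -> sat U (inr r) a.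
Proof.
move=> box ar; have [j dj Pj] := P_unbounded (modal_depth a + n).
have nj : n <= j by apply: leq_trans dj; apply: leq_addl.
apply/(chain_modal_depth_equiv a r (j - n)) => //; first by rewrite leq_subRL // addnC.
by apply: (box (inr (j - n))); rewrite /= subnK.
Qed.

Lemma root_window_equiv (a : frm) n m :
  (forall r, r < modal_depth a -> P (r + n) = P (r + m)) ->
  (sat U (inl n) a <-> sat U (inl m) a).
Proof.
elim: a n m => [|[]//|b IH|b IHb c IHc|i b _] n m /= Pnm.
- by [].
- by rewrite (IH n m).
- rewrite (IHb n m) ?(IHc n m) // => r rd; apply: Pnm; apply: leq_trans rd _;
    by rewrite ?leq_maxl ?leq_maxr.
- have transfer n' m' : (forall r, r < (modal_depth b).+1 -> P (r + n') = P (r + m')) ->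
      sat U (inl n') (FBox i b) -> sat U (inl m') (FBox i b).
    move=> Pnm' box [//|r] /= Prm.
    case: (ltnP r (modal_depth b).+1) => [rd | /ltnW br].
      by apply: (box (inr r)); rewrite /= Pnm'.
    exact: root_box_deep_chain box br.
  by split; apply: transfer => // r rd; rewrite Pnm.
Qed.

Lemma shift_rel_forth s t :
  shift_rel s t -> sat U t (dia FTop) -> shift_rel (shift_state s) (shift_state t).
Proof.
case: s => [n|k]; case: t => [//|l] /= Rst /sat_chain_dia_top l_gt0.
- by rewrite -addSnnS prednK.
- by rewrite Rst prednK.
Qed.

Lemma shift_rel_back s t :
  shift_rel (shift_state s) t -> exists2 l, t = inr l & shift_rel s (inr l.+1).
Proof.
case: s => [n|[|k]]; case: t => [//|l] /= Rst; exists l => //.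
- by rewrite addSnnS.
- by rewrite Rst.
Qed.

Lemma bisimulation_update (M : kmodel 'I_0 'I_1) (Z : st M -> st U -> Prop) :
  bisimulation Z ->
  bisimulation (fun (u : st (upd_model M shift_action)) (t : st U) =>
                  exists2 s, Z (sval u).1 s & t = shift_state s).
Proof.
move=> bisZ; have Zsat := bisimulation_sat bisZ.
case: bisZ => _ Zforth Zback; split=> [[]//|i|i].
- move=> [[s []] s_pre] _ [[w []] w_pre] [t Zst ->] [/= Msw _].
  have [t' tt' Zwt'] := Zforth _ _ _ _ Zst Msw.
  exists (shift_state t'); last by exists t'.
  by apply: shift_rel_forth tt' _; apply/(Zsat _ _ _ Zwt').
- move=> [[s []] s_pre] _ t' [t Zst ->] /shift_rel_back [l -> tl].
  have [w Msw Zwl] := Zback i _ _ _ Zst tl.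
  have w_pre : sat M w (dia FTop) by rewrite (Zsat _ _ _ Zwl); apply/sat_chain_dia_top.
  by exists (exist _ (w, tt) w_pre); last exists (inr l.+1).
Qed.

Definition bisimilar_to_root (y : pmodel 'I_0 'I_1) (n : nat) : Prop :=
  exists2 Z : st (mdl y) -> st U -> Prop, bisimulation Z & Z (pt y) (inl n).

Lemma psat_bisimilar_to_root y n a :
  bisimilar_to_root y n -> psat y a <-> sat U (inl n) a.
Proof. by case=> Z bisZ Zyn; apply: bisimulation_sat bisZ _ _ _ Zyn. Qed.

Lemma bisimilar_to_root_update y n H :
  bisimilar_to_root y n -> bisimilar_to_root (product_update y shift_action tt H) n.+1.
Proof.
case=> Z bisZ Zyn; exists (fun u t => exists2 s, Z (sval u).1 s & t = shift_state s).
  exact: bisimulation_update.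
by exists (inl n).
Qed.

Definition shift_root (n : nat) : pmodel 'I_0 'I_1 := @PModel 'I_0 'I_1 U (inl n).

Definition shift_orbit (n : nat) : pmodel 'I_0 'I_1 :=
  iter n (update_by shift_action tt) (shift_root 0).

Lemma shift_orbit_bisimilar n : bisimilar_to_root (shift_orbit n) n.
Proof.
elim: n => [|n IH]; first by exists eq; [exact: bisimulation_eq|].
rewrite /shift_orbit /= /update_by -/(shift_orbit n).
case: excluded_middle_informative => [H|]; first exact: bisimilar_to_root_update.
by case; apply/(psat_bisimilar_to_root _ _ _ IH); apply: sat_root_dia_top.
Qed.

Lemma psat_shift_orbit n a : psat (shift_orbit n) a <-> sat U (inl n) a.
Proof. exact/psat_bisimilar_to_root/shift_orbit_bisimilar. Qed.

Lemma shift_orbit_seq : orbit_seq shift_action (shift_root 0) shift_orbit.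
Proof.
by apply: orbit_seq_iter => // n; apply/psat_shift_orbit; apply: sat_root_dia_top.
Qed.

Lemma shift_orbit_periodic : periodic_seq shift_orbit -> eventually_periodic P.
Proof.
case=> n [k [k_gt0 per]]; exists n, k; split=> // j nj.
have := per (dia (chain_formula (j - n))).
rewrite !psat_shift_orbit !sat_root_dia_chain_formula addnA subnK //.
by move/Bool.eq_iff_eq_true.
Qed.

Lemma shift_orbit_converges (nk : nat -> nat) :
  (forall d, exists K, forall k r, K <= k -> r < d -> P (r + nk k) = P r) ->
  converges (fun k => shift_orbit (nk k)) (shift_orbit 0).
Proof.
move=> Pwindow a /psat_shift_orbit a0; have [K PK] := Pwindow (modal_depth a).
exists K => k Kk; apply/psat_shift_orbit/(root_window_equiv a (nk k) 0) => // r rd.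
by rewrite addn0; apply: PK.
Qed.

Definition shift_space (y : pmodel 'I_0 'I_1) : Prop :=
  countable_type (st (mdl y)) /\ exists n, bisimilar_to_root y n.

Lemma shift_space_root n : shift_space (shift_root n).
Proof.
split; first by exists pickle; apply: pcan_inj pickleK.
by exists n, eq; first exact: bisimulation_eq.
Qed.

Lemma modal_space_shift_space : modal_space K_valid shift_space.
Proof. by move=> y [y_count _]; split=> // a; apply. Qed.

Lemma clean_shift_action : clean_action_model K_valid shift_space shift_action.
Proof.
split.
- by exists (fun _ => 0) => -[] [].
- by exists tt.
- by exists 1, (fun _ => dia FTop) => a; exists ord0 => M s /=; tauto.
- move=> y [_ [n yn]]; exists tt; split=> [//||[] _ _]; last by case: tt.
  by apply/(psat_bisimilar_to_root _ _ _ yn); apply: sat_root_dia_top.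
- move=> y [] H [y_count [n yn]] _; split; last first.
    by exists n.+1; apply: bisimilar_to_root_update.
  by apply: countable_upd_model => //; exists (fun _ => 0) => -[] [].
Qed.

End ShiftModel.

Theorem proposition10 :
  exists (Phi I : finType) (L : form Phi I -> Prop) (X : pmodel Phi I -> Prop)
         (A : amodel Phi I),
    [/\ normal_logic L, modal_space L X, clean_action_model L X A &
        [/\ amodel_finite A, amodel_static A & ~ amodel_boolean A]] /\
    exists (x : pmodel Phi I) (xs : nat -> pmodel Phi I),
      [/\ X x, orbit_seq A x xs, ~ periodic_seq xs &
          exists m, recurrent_seq (fun n => xs (m + n))].
Proof.
have P_unbounded := even_ruler_unbounded.
exists 'I_0, 'I_1, K_valid, (shift_space even_ruler), shift_action; split.
  split; [exact: normal_K_valid | exact: modal_space_shift_space |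
          exact: clean_shift_action | ].
  by split=> [|//|/(_ tt)//]; exists 1, (fun _ => tt) => -[]; exists ord0.
exists (shift_root even_ruler 0), (shift_orbit even_ruler); split.
- exact: shift_space_root.
- exact: shift_orbit_seq.
- by move/(shift_orbit_periodic _ P_unbounded); apply: even_ruler_not_eventually_periodic.
- exists 0, (fun k => 2 ^ k.+1); split=> [k | ]; first by rewrite ltn_exp2l.
  apply: (shift_orbit_converges _ P_unbounded) => d; exists d => k r dk rd.
  apply: even_ruler_addX; have := ltn_expl k.+1 (isT : 1 < 2); lia.
Qed.
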